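(* Let $\Sigma$ be a real symmetric positive definite $n\times n$ matrix and let $D_0$ be the diagonal matrix with $[D_0]_{ii}=\dfrac{1}{2[\Sigma^{-1}]_{ii}}$, $i=1,\dots,n$. Let \[\mathcal S(\Sigma)=\{(\hat\Sigma,\tilde\Sigma)\mid \Sigma=\hat\Sigma+\tilde\Sigma,\ \hat\Sigma\ge0,\ \tilde\Sigma\ge 0,\ \tilde\Sigma\text{ diagonal}\},\] and let $(\hat\Sigma_{\rm opt},\tilde\Sigma_{\rm opt})$ be the (unique) maximizer over $\mathcal S(\Sigma)$ of $\operatorname{trace}(\hat\Sigma-\hat\Sigma\Sigma^{-1}\hat\Sigma)$ (equivalently, of $\min_{K\in\mathbb R^{n\times n}}L(K,\hat\Sigma,\tilde\Sigma)$, where $L(K,\hat\Sigma,\tilde\Sigma)=\operatorname{trace}(\hat\Sigma-K\hat\Sigma-\hat\Sigma K'+K(\hat\Sigma+\tilde\Sigma)K')$). If $\Sigma-D_0\ge 0$, then $\tilde\Sigma_{\rm opt}=D_0$ and $\hat\Sigma_{\rm opt}=\Sigma-D_0$. Otherwise, $\tilde\Sigma_{\rm opt}\le D_0$ and $\hat\Sigma_{\rm opt}$ is singular.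
   Context: All matrices are real symmetric $n\times n$ unless stated; $M\ge0$ means positive semidefinite and $A\le B$ means $B-A\ge 0$. $L$ is the trace of the mean-square error of the estimate $K\mathbf x$ of $\hat{\mathbf x}$ when $\mathbf x=\hat{\mathbf x}+\tilde{\mathbf x}$ with uncorrelated zero-mean components of covariances $\hat\Sigma,\tilde\Sigma$. *)

From HB Require Import structures.
From mathcomp Require Import all_boot all_order all_algebra.
Set Implicit Arguments. Unset Strict Implicit. Unset Printing Implicit Defensive.
Import Order.TTheory GRing.Theory Num.Theory.
Local Open Scope ring_scope.

Definition symmetricmx (R : realFieldType) (n : nat) (A : 'M[R]_n) : Prop :=
  A^T = A.

Definition psdmx (R : realFieldType) (n : nat) (A : 'M[R]_n) : Prop :=
  symmetricmx A /\ forall v : 'cV[R]_n, 0 <= (v^T *m A *m v) 0 0.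

Definition pdmx (R : realFieldType) (n : nat) (A : 'M[R]_n) : Prop :=
  symmetricmx A /\ forall v : 'cV[R]_n, v != 0 -> 0 < (v^T *m A *m v) 0 0.

Definition loewner_le (R : realFieldType) (n : nat) (A B : 'M[R]_n) : Prop :=
  psdmx (B - A).

Definition D0 (R : realFieldType) (n : nat) (S : 'M[R]_n) : 'M[R]_n :=
  diag_mx (\row_i (2 * invmx S i i)^-1).

Definition decomp_set (R : realFieldType) (n : nat) (S Sh St : 'M[R]_n) : Prop :=
  S = Sh + St /\ psdmx Sh /\ psdmx St /\ is_diag_mx St.

Definition objective (R : realFieldType) (n : nat) (S Sh : 'M[R]_n) : R :=
  \tr (Sh - Sh *m invmx S *m Sh).

Definition is_opt (R : realFieldType) (n : nat) (S Sh St : 'M[R]_n) : Prop :=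
  decomp_set S Sh St /\
  forall Sh' St' : 'M[R]_n, decomp_set S Sh' St' -> objective S Sh' <= objective S Sh.

From Pilot Require Import Defs.
From HB Require Import structures.
From mathcomp Require Import all_boot all_order all_algebra.
From mathcomp Require Import ring lra.
Set Implicit Arguments. Unset Strict Implicit. Unset Printing Implicit Defensive.
Import Order.TTheory GRing.Theory Num.Theory.
Local Open Scope ring_scope.

(* Write St = diag d and s_i = [S^-1]_ii.  Since (S - D) S^-1 (S - D) = S - 2 D + D S^-1 D
   for D = diag d, the objective is the separable concave function
   sum_i (d_i - s_i d_i^2), maximized coordinatewise at d_i = 1/(2 s_i), i.e. at D0.
   If D0 is feasible it is therefore the optimum.  Otherwise, no optimal d_i exceeds
   1/(2 s_i), since lowering d_i keeps S - diag d positive semidefinite and increases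
   the objective.  And if Sh = S - diag d were invertible, Sh - t e_i e_i^T would stay
   positive semidefinite for small t > 0, so every d_i below 1/(2 s_i) could be raised;
   this would force d = D0, which is infeasible. *)

Section QuadraticForms.
Variables (R : realFieldType) (n : nat).
Implicit Types (A B : 'M[R]_n) (u v x : 'cV[R]_n) (d : 'rV[R]_n).

Definition mxform A u v := (u^T *m A *m v) 0 0.

Lemma mxformBl A B u v : mxform (A - B) u v = mxform A u v - mxform B u v.
Proof. by rewrite /mxform mulmxBr mulmxBl !mxE. Qed.

Lemma mxformZl a A u v : mxform (a *: A) u v = a * mxform A u v.
Proof. by rewrite /mxform -scalemxAr -scalemxAl mxE. Qed.

Lemma mxform_sym A u v : Defs.symmetricmx A -> mxform A u v = mxform A v u.
Proof.
move=> symA; rewrite /mxform.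
transitivity ((u^T *m A *m v)^T 0 0); first by rewrite [RHS]mxE.
by rewrite !trmx_mul trmxK symA mulmxA.
Qed.

Lemma mxform_diag d v : mxform (diag_mx d) v v = \sum_i d 0 i * v i 0 ^+ 2.
Proof.
rewrite /mxform mul_mx_diag mxE; apply: eq_bigr => i _.
by rewrite !mxE; ring.
Qed.

Lemma mxform_delta A i : mxform A (delta_mx i 0) (delta_mx i 0) = A i i.
Proof. by rewrite /mxform trmx_delta -rowE -colE !mxE. Qed.

Lemma diag_mx_delta i : diag_mx (delta_mx 0 i) = delta_mx i i :> 'M[R]_n.
Proof.
apply/matrixP => j k; rewrite !mxE eqxx /=.
have [<-|jk] := eqVneq j k; first by rewrite andbb.
by case: (eqVneq j i) => [ji|]; rewrite // -ji eq_sym (negbTE jk).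
Qed.

Lemma mxform_delta_mx i v : mxform (delta_mx i i) v v = v i 0 ^+ 2.
Proof.
rewrite -diag_mx_delta mxform_diag (bigD1 i) //= big1 => [|j ji].
  by rewrite mxE !eqxx mul1r addr0.
by rewrite mxE (negbTE ji) andbF mul0r.
Qed.

Lemma mxform_sub_scale A u x a : Defs.symmetricmx A ->
  mxform A (u - a *: x) (u - a *: x) =
  mxform A u u - 2 * a * mxform A x u + a ^+ 2 * mxform A x x.
Proof.
move=> symA; have Exu := mxform_sym x u symA.
have trD : (u - a *: x)^T = u^T - a *: x^T by apply/matrixP => k l; rewrite !mxE.
move: Exu; rewrite /mxform trD.
rewrite !(mulmxBl, mulmxBr) -!scalemxAl -!scalemxAr !mxE => ->; ring.
Qed.

Lemma mxform_invmx_delta A i v : Defs.symmetricmx A -> A \in unitmx ->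
  mxform A (invmx A *m delta_mx i 0) v = v i 0.
Proof.
move=> symA unitA.
rewrite /mxform trmx_mul trmx_inv symA trmx_delta -(mulmxA _ (invmx A)).
by rewrite mulVmx // mulmx1 -rowE mxE.
Qed.

Lemma mxform_invmx A i : Defs.symmetricmx A -> A \in unitmx ->
  mxform A (invmx A *m delta_mx i 0) (invmx A *m delta_mx i 0) = invmx A i i.
Proof. by move=> symA unitA; rewrite mxform_invmx_delta // -colE mxE. Qed.

End QuadraticForms.

Section PositiveSemidefinite.
Variables (R : realFieldType) (n : nat).
Implicit Types (A : 'M[R]_n) (v : 'cV[R]_n) (d : 'rV[R]_n).

Lemma psdmx_diagP d : psdmx (diag_mx d) <-> forall i, 0 <= d 0 i.
Proof.
split=> [[_ psd_d] i | d_ge0].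
  by have := psd_d (delta_mx i 0); rewrite -/(mxform _ _ _) mxform_delta mxE eqxx.
split=> [|v]; first exact: tr_diag_mx.
rewrite -/(mxform _ _ _) mxform_diag sumr_ge0 // => i _.
by rewrite mulr_ge0 ?sqr_ge0.
Qed.

Lemma psdmx_sub_delta A i t : Defs.symmetricmx A ->
  (forall v, t * v i 0 ^+ 2 <= mxform A v v) -> psdmx (A - t *: delta_mx i i).
Proof.
move=> symA le_tA; split=> [|v].
  by rewrite /Defs.symmetricmx linearB /= linearZ /= trmx_delta symA.
by rewrite -/(mxform _ _ _) mxformBl mxformZl mxform_delta_mx subr_ge0.
Qed.

Lemma psdmx_invmx_diag_ge0 A i : psdmx A -> A \in unitmx -> 0 <= invmx A i i.
Proof. by case=> symA psdA unitA; rewrite -mxform_invmx //; apply: psdA. Qed.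

(* Completing the square at the vector [A^-1 e_i] shows that
   [v^T A v >= t v_i^2] as long as [t [A^-1]_ii <= 1]. *)
Lemma psdmx_sub_delta_invmx A i t : psdmx A -> A \in unitmx ->
  0 <= t -> t * invmx A i i <= 1 -> psdmx (A - t *: delta_mx i i).
Proof.
move=> [symA psdA] unitA t_ge0 tc_le1; apply: psdmx_sub_delta => // v.
pose x : 'cV[R]_n := invmx A *m delta_mx i 0; pose c := invmx A i i.
have := psdA (v - (t * v i 0) *: x); rewrite -/(mxform _ _ _).
rewrite mxform_sub_scale // mxform_invmx_delta // mxform_invmx // -/c => sq_ge0.
have : 0 <= t * v i 0 ^+ 2 * (1 - t * c).
  by rewrite mulr_ge0 ?subr_ge0 // mulr_ge0 ?sqr_ge0.
nra.
Qed.

Lemma pdmx_unit A : pdmx A -> A \in unitmx.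
Proof.
case=> _ pdA; rewrite unitmxE unitfE; apply/negP => /det0P [v v_neq0 vA0].
have := pdA v^T; rewrite trmx_eq0 => /(_ v_neq0).
by rewrite trmxK vA0 mul0mx mxE ltxx.
Qed.

Lemma pdmx_invmx_diag_gt0 A i : pdmx A -> 0 < invmx A i i.
Proof.
move=> pdA; have unitA := pdmx_unit pdA; case: pdA => symA pdA.
rewrite -mxform_invmx //; apply: pdA; apply: contraTneq isT => x0.
have : A *m (invmx A *m delta_mx i 0) = delta_mx i (0 : 'I_1).
  by rewrite mulmxA mulmxV // mul1mx.
rewrite x0 mulmx0 => /matrixP/(_ i 0).
by rewrite !mxE eqxx => /eqP; rewrite eq_sym oner_eq0.
Qed.

End PositiveSemidefinite.

Section Gain.
Variable R : realFieldType.
Implicit Types s x y : R.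

Definition gain s x := x - s * x ^+ 2.

Lemma gain_vertex s x : 0 < s ->
  gain s (2 * s)^-1 - gain s x = s * (x - (2 * s)^-1) ^+ 2.
Proof.
by move=> s_gt0; rewrite /gain; field; rewrite gt_eqF ?mulr_gt0.
Qed.

Lemma gain_lt_vertex s x : 0 < s -> x != (2 * s)^-1 -> gain s x < gain s (2 * s)^-1.
Proof.
move=> s_gt0 x_neq; rewrite -subr_gt0 gain_vertex // mulr_gt0 //.
by rewrite exprn_even_gt0 // subr_eq0.
Qed.

Lemma gain_lt s x y : 0 < s -> x < y <= (2 * s)^-1 -> gain s x < gain s y.
Proof.
move=> s_gt0 /andP[lt_xy le_ym].
have := gain_vertex x s_gt0; have := gain_vertex y s_gt0.
set m := (2 * s)^-1 => gain_y gain_x.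
have : 0 < s * ((y - x) * ((m - y) + (m - x))).
  rewrite mulr_gt0 // mulr_gt0 ?subr_gt0 // ltr_wpDl ?subr_ge0 //.
  by rewrite subr_gt0 (lt_le_trans lt_xy).
lra.
Qed.

End Gain.

Section DiagonalDecomposition.
Variables (R : realFieldType) (n : nat) (S : 'M[R]_n).
Hypothesis S_pd : pdmx S.
Implicit Types d : 'rV[R]_n.

Let s i := invmx S i i.
Let d0 : 'rV[R]_n := \row_i (2 * s i)^-1.

Let s_gt0 i : 0 < s i. Proof. exact: pdmx_invmx_diag_gt0. Qed.

Definition total_gain d := \sum_i gain (invmx S i i) (d 0 i).

Definition diag_feasible d := (forall i, 0 <= d 0 i) /\ psdmx (S - diag_mx d).

Definition diag_optimal d :=
  diag_feasible d /\ forall d', diag_feasible d' -> total_gain d' <= total_gain d.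

Lemma objective_sub_diag d : objective S (S - diag_mx d) = total_gain d.
Proof.
have unitS := pdmx_unit S_pd; rewrite /objective.
have -> : (S - diag_mx d) *m invmx S *m (S - diag_mx d) =
    S - diag_mx d - (diag_mx d - diag_mx d *m invmx S *m diag_mx d).
  rewrite mulmxBl mulmxV // mulmxBl mul1mx mulmxBr -(mulmxA _ (invmx S)).
  by rewrite mulVmx // mulmx1 opprB addrA.
rewrite opprB addrC subrK linearB /= mxtrace_diag /mxtrace -sumrB.
apply: eq_bigr => i _; rewrite mul_mx_diag mul_diag_mx !mxE /gain; ring.
Qed.

Lemma is_opt_diag Sh St : is_opt S Sh St ->
  exists d, [/\ St = diag_mx d, Sh = S - diag_mx d & diag_optimal d].
Proof.
move=> [[S_sum [psd_Sh [psd_St /diag_mxP [d St_d]]]] opt].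
have Sh_d : Sh = S - diag_mx d by rewrite S_sum St_d addrK.
exists d; split=> //; split.
  by split; [apply/psdmx_diagP; rewrite -St_d | rewrite -Sh_d].
move=> d' [d'_ge0 psd_d']; rewrite -!objective_sub_diag -Sh_d.
apply: (opt _ (diag_mx d')).
split; first by rewrite subrK.
by split=> //; split; [apply/psdmx_diagP | apply: diag_mx_is_diag].
Qed.

Lemma total_gain_shift d i t :
  total_gain (d + t *: delta_mx 0 i) =
  total_gain d + (gain (s i) (d 0 i + t) - gain (s i) (d 0 i)).
Proof.
rewrite /total_gain /s (bigD1 i) // [in RHS](bigD1 i) //= !mxE !eqxx mulr1.
under eq_bigr => j /negbTE ji do rewrite !mxE ji mulr0 addr0.
ring.
Qed.

Lemma sub_diag_shift d i t :
  S - diag_mx (d + t *: delta_mx 0 i) = (S - diag_mx d) - t *: delta_mx i i.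
Proof. by rewrite linearD linearZ /= diag_mx_delta opprD addrA. Qed.

Lemma diag_optimal_shift d i t : diag_optimal d -> 0 <= d 0 i + t ->
  psdmx ((S - diag_mx d) - t *: delta_mx i i) ->
  gain (s i) (d 0 i + t) <= gain (s i) (d 0 i).
Proof.
move=> [[d_ge0 _] opt] shift_ge0 psd_shift.
have : diag_feasible (d + t *: delta_mx 0 i).
  split; last by rewrite sub_diag_shift.
  move=> j; rewrite !mxE; have [->|ji] := eqVneq j i; first by rewrite mulr1.
  by rewrite mulr0 addr0.
by move/opt; rewrite total_gain_shift gerDl subr_le0.
Qed.

Lemma diag_optimal_le_D0 d i : diag_optimal d -> d 0 i <= d0 0 i.
Proof.
move=> d_opt; have [[_ psd_d] _] := d_opt.
rewrite mxE leNgt; apply/negP => lt_m_d.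
set t := (2 * s i)^-1 - d 0 i.
have shift_ge0 : 0 <= d 0 i + t by rewrite addrC subrK invr_ge0 pmulr_rge0 ?ltW.
have psd_shift : psdmx (S - diag_mx d - t *: delta_mx i i).
  apply: psdmx_sub_delta => [|v]; first by case: psd_d.
  apply: (@le_trans _ _ 0); last by case: psd_d => _; apply.
  by rewrite mulr_le0_ge0 ?sqr_ge0 // subr_le0 ltW.
have := diag_optimal_shift d_opt shift_ge0 psd_shift.
by rewrite addrC subrK leNgt gain_lt_vertex ?gt_eqF.
Qed.

Lemma diag_optimal_unit d : diag_optimal d -> S - diag_mx d \in unitmx -> d = d0.
Proof.
move=> d_opt unit_Sh; have [[d_ge0 psd_Sh] _] := d_opt.
apply/rowP => i; apply/le_anti; rewrite diag_optimal_le_D0 //=.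
rewrite mxE leNgt; apply/negP => lt_d_m.
set u := (2 * s i)^-1 - d 0 i; set c := invmx (S - diag_mx d) i i.
have u_gt0 : 0 < u by rewrite subr_gt0.
have cu_ge0 : 0 <= c * u.
  exact: mulr_ge0 (psdmx_invmx_diag_ge0 _ psd_Sh unit_Sh) (ltW u_gt0).
have cu1_gt0 : 0 < 1 + c * u by lra.
set t := u / (1 + c * u).
have t_gt0 : 0 < t by rewrite divr_gt0.
have t_le_u : t <= u by rewrite ler_pdivrMr //; nra.
have tc_le1 : t * c <= 1 by rewrite mulrAC ler_pdivrMr // mul1r; lra.
have := diag_optimal_shift d_opt (addr_ge0 (d_ge0 i) (ltW t_gt0))
  (psdmx_sub_delta_invmx psd_Sh unit_Sh (ltW t_gt0) tc_le1).
by rewrite leNgt gain_lt // ltrDl t_gt0 /= -lerBrDl.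
Qed.

Lemma diag_optimal_D0 d : psdmx (S - diag_mx d0) -> diag_optimal d -> d = d0.
Proof.
move=> psd_D0 [_ opt].
have d0_feasible : diag_feasible d0.
  by split=> // i; rewrite mxE invr_ge0 pmulr_rge0 ?ltW.
have gap_ge0 i : 0 <= gain (s i) (d0 0 i) - gain (s i) (d 0 i).
  by rewrite mxE gain_vertex // mulr_ge0 ?sqr_ge0 ?ltW.
have gap0 : \sum_i (gain (s i) (d0 0 i) - gain (s i) (d 0 i)) = 0.
  by apply/le_anti; rewrite sumr_ge0 // andbT sumrB subr_le0; apply: opt.
apply/rowP => i; rewrite mxE; apply/eqP; apply: contraT => d_neq.
have /eqP := psumr_eq0P (fun j _ => gap_ge0 j) gap0 (i := i) isT.
by rewrite subr_eq0 mxE eq_sym lt_eqF // gain_lt_vertex.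
Qed.

End DiagonalDecomposition.

Theorem proposition11 (R : realFieldType) (n : nat) (S Sh St : 'M[R]_n) :
  pdmx S -> is_opt S Sh St ->
  (psdmx (S - D0 S) -> St = D0 S /\ Sh = S - D0 S) /\
  (~ psdmx (S - D0 S) -> loewner_le St (D0 S) /\ Sh \notin unitmx).
Proof.
move=> S_pd /(is_opt_diag S_pd) [d [-> -> d_opt]].
split=> [psd_D0 | not_psd_D0].
  by rewrite /D0 -(diag_optimal_D0 S_pd psd_D0 d_opt).
split.
  rewrite /loewner_le /D0 -linearB psdmx_diagP => i.
  by have := diag_optimal_le_D0 S_pd i d_opt; rewrite !mxE subr_ge0.
apply/negP => unit_Sh; apply: not_psd_D0; have [[_ psd_Sh] _] := d_opt.
by rewrite /D0 -(diag_optimal_unit S_pd d_opt unit_Sh).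
Qed.
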